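(* Let $G$ be a groupoid with finite object set $G_0$, $A$ a unital ring and $\alpha=(A_g,\alpha_g)_{g\in G}$ a unital partial action of $G$ on $A$ with $A=\bigoplus_{e\in G_0}A_e$. Then the ring extension $A\subset A\star_\alpha G$ is separable if and only if, for every $[e]\in G_0/\!\sim$, the extension $A_{[e]}\subset A_{[e]}\star_{\alpha_{[e]}}G_{[e]}$ is separable, where $A_{[e]}=\bigoplus_{f\in[e]}A_f$ and $\alpha_{[e]}=(A_g,\alpha_g)_{g\in G_{[e]}}$.
   Context: A groupoid $G$ is a small category in which every morphism is invertible; $G_0$ is its object set (objects identified with identity morphisms), $s,t$ source and target; $gh$ is defined iff $s(g)=t(h)$; $G(e,f)$ is the set of morphisms from $e$ to $f$; $e\sim f$ iff $G(e,f)\neq\emptyset$; $G_{[e]}$ is the full subgroupoid on the class $[e]$. A unital partial action of $G$ on $A$ is a family $\alpha=(A_g,\alpha_g)_{g\in G}$ where $A_{t(g)}$ is a two-sided ideal of $A$, $A_g=A1_g$ is a two-sided ideal of $A_{t(g)}$ with $1_g$ a central idempotent of $A$, $\alpha_g:A_{g^{-1}}\to A_g$ a ring isomorphism, such that $\alpha_e=\mathrm{id}_{A_e}$ for $e\in G_0$, $\alpha_h^{-1}(A_{g^{-1}}\cap A_h)\subseteq A_{(gh)^{-1}}$ and $\alpha_g(\alpha_h(x))=\alpha_{gh}(x)$ for $x\in\alpha_h^{-1}(A_{g^{-1}}\cap A_h)$, whenever $s(g)=t(h)$. The partial skew groupoid ring $A\star_\alpha G=\bigoplus_{g\in G}A_g\delta_g$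 has multiplication $(a_g\delta_g)(b_h\delta_h)=\alpha_g(\alpha_{g^{-1}}(a_g)b_h)\delta_{gh}$ if $s(g)=t(h)$ and $0$ otherwise; it is unital with $1=\sum_{e\in G_0}1_e\delta_e$, and $A$ is regarded as a subring via $a\mapsto\sum_{e\in G_0}(a1_e)\delta_e$. A ring extension $R\subseteq S$ (unital, same identity) is separable if the multiplication map $S\otimes_R S\to S$ splits as a map of $(S,S)$-bimodules; equivalently there exists $x\in S\otimes_R S$ with $m(x)=1_S$ and $sx=xs$ for all $s\in S$. *)

From HB Require Import structures.
From mathcomp Require Import all_boot all_order all_algebra.
From Stdlib Require Import Classical IndefiniteDescription.
Set Implicit Arguments. Unset Strict Implicit. Unset Printing Implicit Defensive.
Import GRing.Theory.
Local Open Scope ring_scope.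

(* Groupoids with a finite set of objects.  [gcomp g h] is meaningful  *)
(* only when [gsrc g = gtgt h]; objects are identified with the        *)
(* identity morphisms [gid e].                                         *)
Record groupoid := Groupoid {
  gobj : finType;
  gmor : eqType;
  gsrc : gmor -> gobj;
  gtgt : gmor -> gobj;
  gid : gobj -> gmor;
  gcomp : gmor -> gmor -> gmor;
  ginv : gmor -> gmor;
  gsrc_id : forall e, gsrc (gid e) = e;
  gtgt_id : forall e, gtgt (gid e) = e;
  gsrc_comp : forall g h, gsrc g = gtgt h -> gsrc (gcomp g h) = gsrc h;
  gtgt_comp : forall g h, gsrc g = gtgt h -> gtgt (gcomp g h) = gtgt g;
  gcompA : forall g h k, gsrc g = gtgt h -> gsrc h = gtgt k ->
     gcomp g (gcomp h k) = gcomp (gcomp g h) k;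
  gcomp_idr : forall g, gcomp g (gid (gsrc g)) = g;
  gcomp_idl : forall g, gcomp (gid (gtgt g)) g = g;
  gsrc_inv : forall g, gsrc (ginv g) = gtgt g;
  gtgt_inv : forall g, gtgt (ginv g) = gsrc g;
  gcompV : forall g, gcomp g (ginv g) = gid (gtgt g);
  gcompVl : forall g, gcomp (ginv g) g = gid (gsrc g)
}.

Definition gconn (G : groupoid) (e f : gobj G) : Prop :=
  exists g : gmor G, gsrc g = e /\ gtgt g = f.

Lemma pdec_ex (P : Prop) : exists b : bool, b = true <-> P.
Proof.
case: (classic P) => [HP|HnP]; [exists true | exists false]; split => //.
Qed.
Definition pdec (P : Prop) : bool :=
  proj1_sig (constructive_indefinite_description _ (pdec_ex P)).

Definition gclass (G : groupoid) (e : gobj G) : pred (gobj G) :=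
  fun f => pdec (gconn e f).

(* x belongs to the ideal A u (u a central idempotent) *)
Definition inI (A : pzRingType) (u x : A) : Prop := x * u = x.

(* Unital partial actions: A_g = A (pa_one g), alpha_g = pa_map g      *)
(* (only its values on A_{g^{-1}} matter).                             *)
Record unital_partial_action (G : groupoid) (A : pzRingType) := UPA {
  pa_one : gmor G -> A;
  pa_map : gmor G -> A -> A;
  pa_one_idem : forall g, pa_one g * pa_one g = pa_one g;
  pa_one_central : forall g a, pa_one g * a = a * pa_one g;
  (* A_g is an ideal of A_{t(g)} *)
  pa_sub_tgt : forall g, pa_one g * pa_one (gid (gtgt g)) = pa_one g;
  (* alpha_g : A_{g^-1} -> A_g is a ring isomorphism *)
  pa_add : forall g x y, inI (pa_one (ginv g)) x -> inI (pa_one (ginv g)) y ->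
     pa_map g (x + y) = pa_map g x + pa_map g y;
  pa_mul : forall g x y, inI (pa_one (ginv g)) x -> inI (pa_one (ginv g)) y ->
     pa_map g (x * y) = pa_map g x * pa_map g y;
  pa_into : forall g x, inI (pa_one (ginv g)) x -> inI (pa_one g) (pa_map g x);
  pa_inj : forall g x y, inI (pa_one (ginv g)) x -> inI (pa_one (ginv g)) y ->
     pa_map g x = pa_map g y -> x = y;
  pa_surj : forall g y, inI (pa_one g) y ->
     exists2 x, inI (pa_one (ginv g)) x & pa_map g x = y;
  pa_id : forall e x, inI (pa_one (gid e)) x -> pa_map (gid e) x = x;
  pa_comp : forall g h x, gsrc g = gtgt h ->
     inI (pa_one (ginv h)) x -> inI (pa_one (ginv g)) (pa_map h x) ->
     inI (pa_one (ginv (gcomp g h))) x /\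
     pa_map g (pa_map h x) = pa_map (gcomp g h) x
}.

Section Skew.
Variables (G : groupoid) (A : pzRingType) (al : unital_partial_action G A).

Definition direct_sum_decomp : Prop :=
  (forall a : A, exists af : gobj G -> A,
      (forall e, inI (pa_one al (gid e)) (af e)) /\ a = \sum_(e : gobj G) af e) /\
  (forall af : gobj G -> A, (forall e, inI (pa_one al (gid e)) (af e)) ->
      \sum_(e : gobj G) af e = 0 -> forall e, af e = 0).

Definition in_sub_sum (P : pred (gobj G)) (a : A) : Prop :=
  exists af : gobj G -> A,
    (forall f, inI (pa_one al (gid f)) (af f)) /\ a = \sum_(f : gobj G | P f) af f.

(* Elements of a partial skew groupoid ring, as formal finite sums
   \sum a_i delta_{g_i}, i.e. lists of pairs (g_i, a_i). *)
Definition fsum := seq (gmor G * A).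

Definition coef (x : fsum) (k : gmor G) : A := \sum_(p <- x | p.1 == k) p.2.

(* equality in the partial skew groupoid ring *)
Definition fequiv (x y : fsum) : Prop := forall k, coef x k = coef y k.

(* x is an element of A_P *_alpha G_P, G_P the full subgroupoid on P:
   every term a delta_g has g in G_P and a in A_g *)
Definition valid (P : pred (gobj G)) (x : fsum) : Prop :=
  forall p, p \in x -> [/\ P (gsrc p.1), P (gtgt p.1) & inI (pa_one al p.1) p.2].

(* (a delta_g)(b delta_h) = alpha_g(alpha_{g^-1}(a) b) delta_{gh} if s(g)=t(h), else 0 *)
Definition fmul (x y : fsum) : fsum :=
  [seq (@gcomp G p.1 q.1, pa_map al p.1 (pa_map al (ginv p.1) p.2 * q.2))
     | p : gmor G * A <- x, q : gmor G * A <- [seq q <- y | gsrc p.1 == gtgt q.1]].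

Definition emb (P : pred (gobj G)) (a : A) : fsum :=
  [seq (gid f, a * pa_one al (gid f)) | f <- enum (gobj G) & P f].

(* R-balanced biadditive maps S x S -> M, S = A_P *_alpha G_P,
   R given as a subset of A embedded in S via emb P *)
Definition balanced (P : pred (gobj G)) (R : A -> Prop) (M : zmodType)
    (beta : fsum -> fsum -> M) : Prop :=
  [/\ forall u u' v v', valid P u -> valid P u' -> valid P v -> valid P v' ->
        fequiv u u' -> fequiv v v' -> beta u v = beta u' v',
      forall u u' v, valid P u -> valid P u' -> valid P v ->
        beta (u ++ u') v = beta u v + beta u' v,
      forall u v v', valid P u -> valid P v -> valid P v' ->
        beta u (v ++ v') = beta u v + beta u v' &
      forall u v r, valid P u -> valid P v -> R r ->
        beta (fmul u (emb P r)) v = beta u (fmul (emb P r) v)].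

(* equality in S \otimes_R S of \sum x_i (x) y_i and \sum x'_j (x) y'_j,
   via the universal property of the tensor product *)
Definition tensor_eq (P : pred (gobj G)) (R : A -> Prop)
    (xs ys : seq (fsum * fsum)) : Prop :=
  forall (M : zmodType) (beta : fsum -> fsum -> M), balanced P R beta ->
    \sum_(p <- xs) beta p.1 p.2 = \sum_(p <- ys) beta p.1 p.2.

(* The extension R \subseteq A_P *_alpha G_P is separable: there is
   x = \sum u_i (x) v_i in S \otimes_R S with m(x) = 1_S and s x = x s. *)
Definition separable_ext (P : pred (gobj G)) (R : A -> Prop) : Prop :=
  exists xs : seq (fsum * fsum),
    [/\ forall p, p \in xs -> valid P p.1 /\ valid P p.2,
        fequiv (flatten [seq fmul p.1 p.2 | p <- xs]) (emb P 1) &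
        forall s, valid P s ->
          tensor_eq P R [seq (fmul s p.1, p.2) | p <- xs]
                        [seq (p.1, fmul p.2 s) | p <- xs]].

End Skew.

(* The class of a morphism g is determined by either endpoint, since
   s(g) ~ t(g).  Hence the terms a δ_g with g in a fixed class c form a
   two-sided ideal S_c of S = A ⋆ G, and S is the finite product of the rings
   S_c = A_c ⋆ G_c.  A separability element of S restricts, componentwise, to
   one of each S_c, and conversely the separability elements of the S_c sum
   to one of S.  Balanced maps transfer between the two settings because
   multiplication respects the decomposition; the decomposition A = ⊕ A_e makes
   the idempotents 1_e orthogonal, so the image of a ∈ A in S_c is the image of
   an element of A_c. *)

From HB Require Import structures.
From mathcomp Require Import all_boot all_order all_algebra.
From Stdlib Require Import IndefiniteDescription.
Set Implicit Arguments. Unset Strict Implicit. Unset Printing Implicit Defensive.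
Import GRing.Theory.
Local Open Scope ring_scope.

Section Connectedness.
Variable G : groupoid.

Lemma gconn_refl (e : gobj G) : gconn e e.
Proof. by exists (gid e); rewrite gsrc_id gtgt_id. Qed.

Lemma gconn_sym (e f : gobj G) : gconn e f -> gconn f e.
Proof. by case=> g [<- <-]; exists (ginv g); rewrite gsrc_inv gtgt_inv. Qed.

Lemma gconn_trans (e f h : gobj G) : gconn e f -> gconn f h -> gconn e h.
Proof.
case=> g1 [<- E1] [g2 [E2 <-]]; exists (gcomp g2 g1).
have E : gsrc g2 = gtgt g1 by rewrite E2 E1.
by rewrite gsrc_comp // gtgt_comp.
Qed.

Lemma gclassP (c f : gobj G) : gclass c f <-> gconn c f.
Proof. by rewrite /gclass /pdec; case: (constructive_indefinite_description _ _). Qed.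

Lemma gclass_refl (c : gobj G) : gclass c c.
Proof. exact/gclassP/gconn_refl. Qed.

Lemma gclass_sym (c d : gobj G) : gclass c d -> gclass d c.
Proof. by move/gclassP/gconn_sym/gclassP. Qed.

Lemma gclass_eq (c d : gobj G) : gclass c d -> gclass c =1 gclass d.
Proof.
move/gclassP => Ccd f; apply/idP/idP => /gclassP Cf; apply/gclassP.
  exact: gconn_trans (gconn_sym Ccd) Cf.
exact: gconn_trans Ccd Cf.
Qed.

Definition saturated (Q : pred (gobj G)) : Prop :=
  forall g : gmor G, Q (gsrc g) = Q (gtgt g).

Lemma gclass_saturated (c : gobj G) : saturated (gclass c).
Proof.
move=> g; have Cg : gconn (gsrc g) (gtgt g) by exists g.
apply/idP/idP => /gclassP Cc; apply/gclassP.
  exact: gconn_trans Cc Cg.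
exact: gconn_trans Cc (gconn_sym Cg).
Qed.

Definition class_rep (c : gobj G) : gobj G := odflt c [pick f | gclass c f].

Lemma class_rep_in (c : gobj G) : gclass c (class_rep c).
Proof. by rewrite /class_rep; case: pickP => [f|_] //=; rewrite gclass_refl. Qed.

Lemma class_rep_eq (c d : gobj G) : gclass c d -> class_rep c = class_rep d.
Proof.
move=> Ccd; rewrite /class_rep (eq_pick (gclass_eq Ccd)).
by case: pickP => [//|none]; have := none d; rewrite gclass_refl.
Qed.

Definition class_reps : seq (gobj G) :=
  [seq c <- enum (gobj G) | class_rep c == c].

Lemma count_class_reps (f : gobj G) :
  count (fun c => gclass c f) class_reps = 1%N.
Proof.
rewrite (@eq_in_count _ _ (pred1 (class_rep f))).
  rewrite count_uniq_mem; last exact/filter_uniq/enum_uniq.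
  by rewrite mem_filter mem_enum -(class_rep_eq (class_rep_in f)) eqxx.
move=> c; rewrite mem_filter => /andP [/eqP rep_c _] /=.
apply/idP/eqP => [Ccf|->]; first by rewrite -rep_c; apply: class_rep_eq.
exact: gclass_sym (class_rep_in f).
Qed.

End Connectedness.

Section SkewRing.
Variables (G : groupoid) (A : pzRingType) (al : unital_partial_action G A).
Implicit Types (Q : pred (gobj G)) (x y : fsum G A).

(* For saturated Q, restr Q is the projection of A ⋆ G onto its ideal A_Q ⋆ G_Q. *)
Definition restr Q x : fsum G A := [seq t <- x | Q (gsrc t.1)].

Lemma restr_id Q x : restr Q (restr Q x) = restr Q x.
Proof. exact: filter_id. Qed.

Lemma restr_cat Q x y : restr Q (x ++ y) = restr Q x ++ restr Q y.
Proof. exact: filter_cat. Qed.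

Lemma coef_restr Q x k :
  coef (restr Q x) k = if Q (gsrc k) then coef x k else 0.
Proof.
rewrite /coef big_filter_cond; case: ifP => Qk.
  by apply: eq_bigl => p; case: eqP => [->|]; rewrite ?Qk ?andbF.
by rewrite big_pred0 // => p; case: eqP => [->|]; rewrite ?Qk ?andbF.
Qed.

Lemma fequiv_restr Q x y : fequiv x y -> fequiv (restr Q x) (restr Q y).
Proof. by move=> Exy k; rewrite !coef_restr Exy. Qed.

Lemma coef_cat x y k : coef (x ++ y) k = coef x k + coef y k.
Proof. exact: big_cat. Qed.

Lemma coef_flatten (xs : seq (fsum G A)) k :
  coef (flatten xs) k = \sum_(x <- xs) coef x k.
Proof.
elim: xs => [|x xs IH]; first by rewrite big_nil /coef big_nil.
by rewrite big_cons /= coef_cat IH.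
Qed.

Lemma fmul_cons p x y :
  fmul al (p :: x) y =
  [seq (gcomp p.1 q.1, pa_map al p.1 (pa_map al (ginv p.1) p.2 * q.2))
     | q <- [seq q <- y | gsrc p.1 == gtgt q.1]] ++ fmul al x y.
Proof. by []. Qed.

Lemma restr_fmulr Q x y : fmul al x (restr Q y) = restr Q (fmul al x y).
Proof.
elim: x => //= p x IH; rewrite !fmul_cons restr_cat -IH /restr.
rewrite filter_map -!filter_predI; congr (map _ _ ++ _).
apply: eq_filter => q /=; case E: (gsrc p.1 == gtgt q.1); rewrite ?andbF //.
by rewrite andbT gsrc_comp ?(eqP E).
Qed.

Lemma restr_fmull Q x y :
  saturated Q -> fmul al (restr Q x) y = restr Q (fmul al x y).
Proof.
move=> satQ; elim: x => //= p x IH.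
have Qpq (q : gmor G * A) : Q (gsrc (gcomp p.1 q.1)) && (gsrc p.1 == gtgt q.1) =
                            Q (gsrc p.1) && (gsrc p.1 == gtgt q.1).
  by case: eqP => E; rewrite ?andbF // gsrc_comp // satQ -E.
rewrite fmul_cons restr_cat -IH {1}/restr /= -/(restr Q x) /restr filter_map.
rewrite -filter_predI (eq_filter Qpq).
by case: (Q (gsrc p.1)); rewrite // [filter _ y]filter_pred0.
Qed.

Lemma fmul_restr Q x y :
  saturated Q -> fmul al (restr Q x) (restr Q y) = restr Q (fmul al x y).
Proof. by move=> satQ; rewrite restr_fmulr restr_fmull // restr_id. Qed.

Lemma restr_flatten Q (xs : seq (fsum G A)) :
  restr Q (flatten xs) = flatten [seq restr Q x | x <- xs].
Proof. exact: filter_flatten. Qed.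

Lemma restr_emb Q r : restr Q (emb al predT r) = emb al Q r.
Proof.
rewrite /restr /emb filter_map -filter_predI; congr map.
by apply: eq_filter => f /=; rewrite gsrc_id andbT.
Qed.

Lemma valid_predT Q x : valid al Q x -> valid al predT x.
Proof. by move=> Vx p /Vx []. Qed.

Lemma valid_restr Q x : saturated Q -> valid al predT x -> valid al Q (restr Q x).
Proof.
move=> satQ Vx p; rewrite mem_filter => /andP [Qp /Vx [_ _ ?]].
by split; rewrite // -satQ.
Qed.

Lemma restr_valid Q x : valid al Q x -> restr Q x = x.
Proof. by move=> Vx; apply/all_filterP/allP => p /Vx []. Qed.

Lemma fmul_restrl_valid Q s x :
  saturated Q -> valid al Q x -> fmul al (restr Q s) x = fmul al s x.
Proof. by move=> satQ Vx; rewrite restr_fmull // -restr_fmulr restr_valid. Qed.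

Lemma fmul_restrr_valid Q s x :
  saturated Q -> valid al Q x -> fmul al x (restr Q s) = fmul al x s.
Proof. by move=> satQ Vx; rewrite restr_fmulr -restr_fmull // restr_valid. Qed.

Lemma pa_one_id_orth e f : direct_sum_decomp al -> e != f ->
  pa_one al (gid e) * pa_one al (gid f) = 0.
Proof.
move=> [_ uniq_decomp] nef.
set x := pa_one al (gid e) * pa_one al (gid f).
have xe : x * pa_one al (gid e) = x.
  by rewrite /x -mulrA -pa_one_central mulrA pa_one_idem.
have xf : x * pa_one al (gid f) = x by rewrite /x -mulrA pa_one_idem.
pose af g := (if g == e then x else 0) - (if g == f then x else 0).
have af_in g : inI (pa_one al (gid g)) (af g).
  by rewrite /inI /af mulrBl; do 2 case: eqP => [->|_]; rewrite ?mul0r ?xe ?xf.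
have af_sum : \sum_g af g = 0.
  by rewrite /af sumrB -!big_mkcond /= !big_pred1_eq subrr.
by have := uniq_decomp af af_in af_sum e; rewrite /af eqxx (negbTE nef) subr0.
Qed.

Lemma emb_in_sub_sum Q r : direct_sum_decomp al ->
  exists2 r', in_sub_sum al Q r' & emb al Q r = emb al Q r'.
Proof.
move=> decomp; exists (\sum_(f | Q f) r * pa_one al (gid f)).
  by exists (fun f => r * pa_one al (gid f)); split=> // f;
     rewrite /inI -mulrA pa_one_idem.
apply/eq_in_map => f; rewrite mem_filter => /andP [Qf _]; congr pair.
rewrite mulr_suml (bigD1 f) //= -mulrA pa_one_idem big1 ?addr0 // => g /andP [_ ngf].
by rewrite -mulrA pa_one_id_orth ?mulr0.
Qed.

Lemma balanced_restr Q (R : A -> Prop) (M : zmodType)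
    (beta : fsum G A -> fsum G A -> M) :
  saturated Q -> balanced al predT (fun _ => True) beta -> balanced al Q R beta.
Proof.
move=> satQ [b_eq b_addl b_addr b_bal]; split.
- by move=> u u' v v' /valid_predT ? /valid_predT ? /valid_predT ? /valid_predT ?;
     apply: b_eq.
- by move=> u u' v /valid_predT ? /valid_predT ? /valid_predT ?; apply: b_addl.
- by move=> u v v' /valid_predT ? /valid_predT ? /valid_predT ?; apply: b_addr.
- move=> u v r Vu Vv _.
  rewrite -restr_emb fmul_restrr_valid // fmul_restrl_valid //.
  exact: b_bal (valid_predT Vu) (valid_predT Vv) I.
Qed.

Lemma balanced_lift Q (M : zmodType) (beta : fsum G A -> fsum G A -> M) :
  direct_sum_decomp al -> saturated Q -> balanced al Q (in_sub_sum al Q) beta ->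
  balanced al predT (fun _ => True) (fun x y => beta (restr Q x) (restr Q y)).
Proof.
move=> decomp satQ [b_eq b_addl b_addr b_bal]; split.
- move=> u u' v v' Vu Vu' Vv Vv' Euu' Evv'.
  by apply: b_eq; solve [exact: valid_restr | exact: fequiv_restr].
- by move=> u u' v Vu Vu' Vv; rewrite restr_cat b_addl //; exact: valid_restr.
- by move=> u v v' Vu Vv Vv'; rewrite restr_cat b_addr //; exact: valid_restr.
- move=> u v r Vu Vv _ /=.
  rewrite -!fmul_restr // !restr_emb; have [r' Qr' ->] := emb_in_sub_sum Q r decomp.
  by rewrite b_bal //; exact: valid_restr.
Qed.

Lemma separable_ext_restr Q :
  direct_sum_decomp al -> saturated Q ->
  separable_ext al predT (fun _ => True) -> separable_ext al Q (in_sub_sum al Q).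
Proof.
move=> decomp satQ [xs [Vxs mul_xs central_xs]].
exists [seq (restr Q p.1, restr Q p.2) | p <- xs]; split.
- by move=> _ /mapP [p /Vxs [V1 V2] ->]; split; apply: valid_restr.
- have -> : [seq fmul al p.1 p.2 | p <- [seq (restr Q p.1, restr Q p.2) | p <- xs]]
            = [seq restr Q x | x <- [seq fmul al p.1 p.2 | p <- xs]].
    by rewrite -!map_comp; apply: eq_map => p; rewrite /= fmul_restr.
  by move=> k; rewrite -restr_flatten coef_restr mul_xs -coef_restr restr_emb.
- move=> s Vs M beta bal.
  have := central_xs s (valid_predT Vs) M _ (balanced_lift decomp satQ bal).
  rewrite /tensor_eq !big_map /= => E.
  under eq_bigr do rewrite restr_fmulr.
  by under [RHS]eq_bigr do rewrite (restr_fmull _ _ satQ).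
Qed.

Lemma separable_ext_glue (I : eqType) (r : seq I) (Q : I -> pred (gobj G))
    (R : I -> A -> Prop) :
  (forall i, saturated (Q i)) -> (forall f, count (fun i => Q i f) r = 1%N) ->
  (forall i, separable_ext al (Q i) (R i)) -> separable_ext al predT (fun _ => True).
Proof.
move=> satQ partQ sepQ.
pose X i := proj1_sig (constructive_indefinite_description _ (sepQ i)).
have HX i := proj2_sig (constructive_indefinite_description _ (sepQ i)).
exists (flatten [seq X i | i <- r]); split.
- move=> p /flattenP [_ /mapP [i _ ->]]; have [V _ _] := HX i.
  by move=> /V [V1 V2]; split; [exact: valid_predT V1 | exact: valid_predT V2].
- move=> k; rewrite map_flatten -map_comp coef_flatten big_flatten big_map.
  transitivity (\sum_(i <- r | Q i (gsrc k)) coef (emb al predT 1) k).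
    rewrite [RHS]big_mkcond; apply: eq_bigr => i _; have [_ mul_X _] := HX i.
    by rewrite /= -coef_flatten mul_X -restr_emb coef_restr.
  by rewrite big_const_seq partQ /= addr0.
- move=> s Vs M beta bal; rewrite !big_map !big_flatten /= !big_map.
  apply: eq_bigr => i _; have [V _ central_X] := HX i.
  have := central_X _ (valid_restr (satQ i) Vs) M beta
            (balanced_restr (R i) (satQ i) bal).
  rewrite /tensor_eq !big_map /= => E.
  rewrite (eq_big_seq (fun p => beta (fmul al (restr (Q i) s) p.1) p.2)); last first.
    by move=> p /V [Vp1 _]; rewrite fmul_restrl_valid.
  rewrite E; apply: eq_big_seq => p /V [_ Vp2].
  by rewrite fmul_restrr_valid.
Qed.

End SkewRing.

Theorem proposition3p1 (G : groupoid) (A : pzRingType)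
    (al : unital_partial_action G A) :
  direct_sum_decomp al ->
  (separable_ext al predT (fun _ => True) <->
   forall e : gobj G,
     separable_ext al (gclass e) (in_sub_sum al (gclass e))).
Proof.
move=> decomp; split=> [sepG e | sep_classes].
  exact: separable_ext_restr decomp (gclass_saturated e) sepG.
exact: separable_ext_glue (@gclass_saturated G) (@count_class_reps G) sep_classes.
Qed.
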